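(* Let $K$ be a perfect field, $k\subset K$ a subfield, and $W$ a simple two-sided vector space with $\dim_K({}_KW)=n<\infty$ and $\dim_K(W_K)=m<\infty$. If $i\in\mathbb{Z}$ is even, then $\dim_K({}_KW^{i*})=n$ and $\dim_K(W^{i*}_K)=m$. If $i$ is odd, then $\dim_K({}_KW^{i*})=m$ and $\dim_K(W^{i*}_K)=n$.
   Context: A two-sided vector space is a $K\otimes_kK$-module; left (resp. right) multiplication by $K$ is the action of $K\otimes1$ (resp. $1\otimes K$); ${}_KV$, $V_K$ denote the restrictions of scalars. The right dual $V^*$ is $\operatorname{Hom}_K(V_K,K)$ with $(a\cdot\psi\cdot b)(x)=a\psi(bx)$; the left dual ${}^*V$ is $\operatorname{Hom}_K({}_KV,K)$ with $(a\cdot\phi\cdot b)(x)=b\phi(xa)$. Iterated duals: $V^{0*}=V$, $V^{i*}=(V^{(i-1)*})^*$ for $i>0$, $V^{i*}={}^*(V^{(i+1)*})$ for $i<0$. *)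

From HB Require Import structures.
From mathcomp Require Import all_boot all_algebra.
From Stdlib Require Import ProofIrrelevance FunctionalExtensionality.

Set Implicit Arguments.
Unset Strict Implicit.
Unset Printing Implicit Defensive.

Import GRing.Theory.
Local Open Scope ring_scope.

(* A perfect field: characteristic 0, or characteristic p with surjective
   Frobenius map x |-> x^p. *)
Definition perfect_field (K : fieldType) : Prop :=
  forall p : nat, p \in [pchar K] -> forall x : K, exists y : K, y ^+ p = x.

(* A two-sided vector space over K relative to the subfield k of K, i.e. a
   K (x)_k K-module: an abelian group with a left and a right K-action that
   commute with each other and agree on k. *)
Record tsvs (K : fieldType) (k : {pred K}) := TSVS {
  tsv_car :> Type;
  tsv_zero : tsv_car;
  tsv_add : tsv_car -> tsv_car -> tsv_car;
  tsv_opp : tsv_car -> tsv_car;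
  tsv_lact : K -> tsv_car -> tsv_car;
  tsv_ract : tsv_car -> K -> tsv_car;
  tsv_addA : forall x y z, tsv_add x (tsv_add y z) = tsv_add (tsv_add x y) z;
  tsv_addC : forall x y, tsv_add x y = tsv_add y x;
  tsv_add0 : forall x, tsv_add tsv_zero x = x;
  tsv_addN : forall x, tsv_add (tsv_opp x) x = tsv_zero;
  tsv_lactDr : forall a x y, tsv_lact a (tsv_add x y) = tsv_add (tsv_lact a x) (tsv_lact a y);
  tsv_lactDl : forall a b x, tsv_lact (a + b) x = tsv_add (tsv_lact a x) (tsv_lact b x);
  tsv_lactA : forall a b x, tsv_lact (a * b) x = tsv_lact a (tsv_lact b x);
  tsv_lact1 : forall x, tsv_lact 1 x = x;
  tsv_ractDl : forall x y b, tsv_ract (tsv_add x y) b = tsv_add (tsv_ract x b) (tsv_ract y b);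
  tsv_ractDr : forall x a b, tsv_ract x (a + b) = tsv_add (tsv_ract x a) (tsv_ract x b);
  tsv_ractA : forall x a b, tsv_ract x (a * b) = tsv_ract (tsv_ract x a) b;
  tsv_ract1 : forall x, tsv_ract x 1 = x;
  tsv_lractC : forall a x b, tsv_ract (tsv_lact a x) b = tsv_lact a (tsv_ract x b);
  tsv_central : forall c x, c \in k -> tsv_lact c x = tsv_ract x c
}.

Section Ops.
Variables (K : fieldType) (k : {pred K}).

Definition tsv_op (V : tsvs k) : tsvs k.
Proof.
refine (@TSVS K k V (tsv_zero V) (@tsv_add _ _ V) (@tsv_opp _ _ V)
  (fun a x => tsv_ract x a) (fun x b => tsv_lact b x) _ _ _ _ _ _ _ _ _ _ _ _ _ _).
- exact: tsv_addA.
- exact: tsv_addC.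
- exact: tsv_add0.
- exact: tsv_addN.
- by move=> a x y; rewrite tsv_ractDl.
- by move=> a b x; rewrite tsv_ractDr.
- by move=> a b x; rewrite mulrC tsv_ractA.
- exact: tsv_ract1.
- by move=> x y b; rewrite tsv_lactDr.
- by move=> x a b; rewrite tsv_lactDl.
- by move=> x a b; rewrite mulrC tsv_lactA.
- exact: tsv_lact1.
- by move=> a x b; rewrite tsv_lractC.
- by move=> c x kc; rewrite tsv_central.
Defined.

Section RDual.
Variable V : tsvs k.

Definition rlin (f : V -> K) : Prop :=
  (forall x y, f (tsv_add x y) = f x + f y) /\
  (forall x b, f (tsv_ract x b) = f x * b).

Definition rdual_car := {f : V -> K | rlin f}.

Lemma rd_eq (f g : rdual_car) : (forall x, proj1_sig f x = proj1_sig g x) -> f = g.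
Proof.
case: f g => [f hf] [g hg] /= e.
have efg : f = g by apply: functional_extensionality.
subst g; f_equal; exact: proof_irrelevance.
Qed.

Lemma rlin0 : rlin (fun _ => 0).
Proof. by split=> *; rewrite ?addr0 ?mul0r. Qed.

Lemma rlinD f g : rlin f -> rlin g -> rlin (fun x => f x + g x).
Proof.
move=> [f1 f2] [g1 g2]; split=> *; rewrite ?f1 ?g1 ?f2 ?g2.
  by rewrite addrACA.
by rewrite mulrDl.
Qed.

Lemma rlinN f : rlin f -> rlin (fun x => - f x).
Proof. by move=> [f1 f2]; split=> *; rewrite ?f1 ?f2 ?opprD ?mulNr. Qed.

Lemma rlinZl a f : rlin f -> rlin (fun x => a * f x).
Proof. by move=> [f1 f2]; split=> *; rewrite ?f1 ?f2 ?mulrDr ?mulrA. Qed.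

Lemma rlinZr b f : rlin f -> rlin (fun x => f (tsv_lact b x)).
Proof.
move=> [f1 f2]; split=> *; first by rewrite tsv_lactDr f1.
by rewrite -tsv_lractC f2.
Qed.

Definition rd_zero : rdual_car := exist _ _ rlin0.
Definition rd_add (f g : rdual_car) : rdual_car :=
  exist _ _ (rlinD (proj2_sig f) (proj2_sig g)).
Definition rd_opp (f : rdual_car) : rdual_car := exist _ _ (rlinN (proj2_sig f)).
Definition rd_lact a (f : rdual_car) : rdual_car := exist _ _ (rlinZl a (proj2_sig f)).
Definition rd_ract (f : rdual_car) b : rdual_car := exist _ _ (rlinZr b (proj2_sig f)).

(* The right dual V^* = Hom_K(V_K, K), with (a . psi . b)(x) = a psi(b x). *)
Definition rdual : tsvs k.
Proof.
refine (@TSVS K k rdual_car rd_zero rd_add rd_opp rd_lact rd_ract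
  _ _ _ _ _ _ _ _ _ _ _ _ _ _);
  intros; apply: rd_eq => w0 /=.
- by rewrite addrA.
- by rewrite addrC.
- by rewrite add0r.
- by rewrite addNr.
- by rewrite mulrDr.
- by rewrite mulrDl.
- by rewrite mulrA.
- by rewrite mul1r.
- by [].
- by case: x => f [f1 f2] /=; rewrite tsv_lactDl f1.
- by rewrite tsv_lactA.
- by rewrite tsv_lact1.
- by [].
- by case: x => f [f1 f2] /=; rewrite tsv_central // f2 mulrC.
Defined.
End RDual.

(* The left dual *V = Hom_K(_K V, K), with (a . phi . b)(x) = b phi(x a).
   It is literally the opposite of the right dual of the opposite of V. *)
Definition ldual (V : tsvs k) : tsvs k := tsv_op (rdual (tsv_op V)).

(* Iterated duals V^{i*}, i in Z: V^{0*} = V, V^{i*} = (V^{(i-1)*})^* for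
   i > 0, V^{i*} = *(V^{(i+1)*}) for i < 0.  (Negz n denotes -(n+1).) *)
Definition idual (i : int) (V : tsvs k) : tsvs k :=
  match i with
  | Posz n => iter n rdual V
  | Negz n => iter n.+1 ldual V
  end.

Definition lcomb (V : tsvs k) n (c : 'I_n -> K) (b : 'I_n -> V) : V :=
  \big[@tsv_add _ _ V / tsv_zero V]_(i < n) tsv_lact (c i) (b i).
Definition rcomb (V : tsvs k) n (c : 'I_n -> K) (b : 'I_n -> V) : V :=
  \big[@tsv_add _ _ V / tsv_zero V]_(i < n) tsv_ract (b i) (c i).

Definition ldim (V : tsvs k) (n : nat) : Prop :=
  exists b : 'I_n -> V,
    (forall c, lcomb c b = tsv_zero V -> forall i, c i = 0) /\
    (forall x : V, exists c, x = lcomb c b).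

Definition rdim (V : tsvs k) (n : nat) : Prop :=
  exists b : 'I_n -> V,
    (forall c, rcomb c b = tsv_zero V -> forall i, c i = 0) /\
    (forall x : V, exists c, x = rcomb c b).

Definition tsv_sub (V : tsvs k) (S : V -> Prop) : Prop :=
  S (tsv_zero V) /\
  (forall x y, S x -> S y -> S (tsv_add x y)) /\
  (forall a x, S x -> S (tsv_lact a x)) /\
  (forall x b, S x -> S (tsv_ract x b)).

Definition tsv_simple (V : tsvs k) : Prop :=
  (exists x : V, x <> tsv_zero V) /\
  forall S : V -> Prop, tsv_sub S ->
    (forall x, S x -> x = tsv_zero V) \/ (forall x, S x).

End Ops.

From HB Require Import structures.
From mathcomp Require Import all_boot all_algebra.
From Stdlib Require Import ClassicalEpsilon Classical.

Set Implicit Arguments.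
Unset Strict Implicit.
Unset Printing Implicit Defensive.
Import GRing.Theory.
Local Open Scope ring_scope.

(* A two-sided space is a module over the commutative ring A = K (x)_k K, so a
   simple one is A / M for a maximal ideal M, i.e. a field L.  Fixing a nonzero
   right linear form psi on W, the pairing (x, y) |-> psi (x y) identifies W
   with the opposite of W^*: its Gram matrix on a right basis is invertible
   because a nonzero x is a unit of L.  Hence W^* and *W are again simple with
   the two dimensions swapped, and the lemma follows by induction on |i|. *)

HB.instance Definition _ (K : fieldType) (k : {pred K}) (V : tsvs k) :=
  Monoid.isComLaw.Build (tsv_car V) (tsv_zero V) (@tsv_add K k V)
    (@tsv_addA K k V) (@tsv_addC K k V) (@tsv_add0 K k V).

Section TsvTheory.
Variables (K : fieldType) (k : {pred K}) (V : tsvs k).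
Implicit Types (x y z : V) (a b : K).

Local Notation "\tsum_ ( i <- r ) F" :=
  (\big[@tsv_add _ _ V / tsv_zero V]_(i <- r) F) (at level 41, i, r at level 50).

Lemma tsv_addr0 x : tsv_add x (tsv_zero V) = x.
Proof. by rewrite tsv_addC tsv_add0. Qed.

Lemma tsv_addI x y z : tsv_add x y = tsv_add x z -> y = z.
Proof.
by move=> h; rewrite -(tsv_add0 y) -(tsv_add0 z) -(tsv_addN x) -!tsv_addA h.
Qed.

Lemma tsv_addIr x y z : tsv_add y x = tsv_add z x -> y = z.
Proof. by rewrite (tsv_addC y) (tsv_addC z); apply: tsv_addI. Qed.

Lemma tsv_add_idem x : tsv_add x x = x -> x = tsv_zero V.
Proof. by move=> h; apply: (@tsv_addI x); rewrite h tsv_addr0. Qed.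

Lemma tsv_lact0 a : tsv_lact a (tsv_zero V) = tsv_zero V.
Proof. by apply: tsv_add_idem; rewrite -tsv_lactDr tsv_add0. Qed.

Lemma tsv_ract0 x : tsv_ract x 0 = tsv_zero V.
Proof. by apply: tsv_add_idem; rewrite -tsv_ractDr addr0. Qed.

Lemma tsv_0ract b : tsv_ract (tsv_zero V) b = tsv_zero V.
Proof. by apply: tsv_add_idem; rewrite -tsv_ractDl tsv_add0. Qed.

Lemma tsv_lact_sum (I : Type) (r : seq I) (F : I -> V) a :
  tsv_lact a (\tsum_(i <- r) F i) = \tsum_(i <- r) tsv_lact a (F i).
Proof. exact: (big_morph _ (tsv_lactDr a) (tsv_lact0 a)). Qed.

Lemma tsv_ract_sum (I : Type) (r : seq I) (F : I -> V) b :
  tsv_ract (\tsum_(i <- r) F i) b = \tsum_(i <- r) tsv_ract (F i) b.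
Proof.
exact: (big_morph (fun x : V => tsv_ract x b) (fun x y => tsv_ractDl x y b)
  (tsv_0ract b)).
Qed.

Lemma rlin_zero (f : V -> K) : rlin f -> f (tsv_zero V) = 0.
Proof. by case=> _ fZ; rewrite -(tsv_ract0 (tsv_zero V)) fZ mulr0. Qed.

Lemma rlin_rcomb (f : V -> K) n (c : 'I_n -> K) (e : 'I_n -> V) :
  rlin f -> f (rcomb c e) = \sum_i f (e i) * c i.
Proof.
move=> hf; have [fD fZ] := hf.
rewrite /rcomb (big_morph f fD (rlin_zero hf)).
by apply: eq_bigr => i _; rewrite fZ.
Qed.

End TsvTheory.

Section Opposite.
Variables (K : fieldType) (k : {pred K}) (V : tsvs k).

Lemma ldim_op n : ldim (tsv_op V) n <-> rdim V n.
Proof. by split=> -[b h]; exists b. Qed.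

Lemma rdim_op n : rdim (tsv_op V) n <-> ldim V n.
Proof. by split=> -[b h]; exists b. Qed.

Lemma tsv_sub_op (S : V -> Prop) : tsv_sub (V := tsv_op V) S -> tsv_sub S.
Proof.
case=> S0 [SD [SL SR]]; do 3!split=> //.
  by move=> a x Sx; exact: (SR x a).
by move=> x b Sx; exact: (SL b x).
Qed.

Lemma simple_op : tsv_simple V -> tsv_simple (tsv_op V).
Proof. by case=> nz hS; split=> // S /tsv_sub_op /hS. Qed.

End Opposite.

Section Isomorphism.
Variables (K : fieldType) (k : {pred K}) (V U : tsvs k) (f : V -> U).
Hypothesis fD : forall x y, f (tsv_add x y) = tsv_add (f x) (f y).
Hypothesis fL : forall a x, f (tsv_lact a x) = tsv_lact a (f x).
Hypothesis fR : forall x b, f (tsv_ract x b) = tsv_ract (f x) b.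
Hypothesis f_eq0 : forall x, f x = tsv_zero U -> x = tsv_zero V.
Hypothesis f_onto : forall u, exists x, u = f x.

Lemma iso_zero : f (tsv_zero V) = tsv_zero U.
Proof. by apply: tsv_add_idem; rewrite -fD tsv_add0. Qed.

Lemma iso_simple : tsv_simple V -> tsv_simple U.
Proof.
case=> -[x0 nz_x0] hS; split; first by exists (f x0) => /f_eq0.
move=> S [S0 [SD [SL SR]]].
have Sf : tsv_sub (fun x => S (f x)).
  split; first by rewrite iso_zero.
  split; first by move=> x y Sx Sy; rewrite fD; apply: SD.
  by split=> [a x Sx | x b Sx]; [rewrite fL; apply: SL | rewrite fR; apply: SR].
case: (hS _ Sf) => H; [left | right] => u; have [y ->] := f_onto u => //.
by move/H ->; rewrite iso_zero.
Qed.

Lemma iso_ldim n : ldim V n -> ldim U n.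
Proof.
case=> b [b_free b_span].
have fl c : f (lcomb c b) = lcomb c (fun i => f (b i)).
  rewrite /lcomb (big_morph f fD iso_zero); exact: eq_bigr.
exists (fun i => f (b i)); split=> [c | u]; first by rewrite -fl => /f_eq0 /b_free.
by have [x ->] := f_onto u; have [c ->] := b_span x; exists c.
Qed.

Lemma iso_rdim n : rdim V n -> rdim U n.
Proof.
case=> b [b_free b_span].
have fr c : f (rcomb c b) = rcomb c (fun i => f (b i)).
  rewrite /rcomb (big_morph f fD iso_zero); exact: eq_bigr.
exists (fun i => f (b i)); split=> [c | u]; first by rewrite -fr => /f_eq0 /b_free.
by have [x ->] := f_onto u; have [c ->] := b_span x; exists c.
Qed.

End Isomorphism.

(* A sequence [:: (a_1, b_1); ...] encodes the tensor sum_i a_i (x) b_i of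
   K (x)_k K, acting on V. *)
Definition tensor_act (K : fieldType) (k : {pred K}) (V : tsvs k)
    (s : seq (K * K)) (x : V) : V :=
  \big[@tsv_add _ _ V / tsv_zero V]_(p <- s) tsv_lact p.1 (tsv_ract x p.2).

Section TensorAction.
Variables (K : fieldType) (k : {pred K}) (V : tsvs k).
Implicit Types (s t : seq (K * K)) (x y : V).
Local Notation act := (@tensor_act K k V).

Lemma tensor_actD s x y : act s (tsv_add x y) = tsv_add (act s x) (act s y).
Proof.
by rewrite /tensor_act -big_split; apply: eq_bigr => p _; rewrite tsv_ractDl tsv_lactDr.
Qed.

Lemma tensor_act0 s : act s (tsv_zero V) = tsv_zero V.
Proof. by rewrite /tensor_act big1 // => p _; rewrite tsv_0ract tsv_lact0. Qed.

Lemma tensor_actL s a x : act s (tsv_lact a x) = tsv_lact a (act s x).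
Proof.
rewrite /tensor_act tsv_lact_sum; apply: eq_bigr => p _.
by rewrite tsv_lractC -!tsv_lactA mulrC.
Qed.

Lemma tensor_actR s b x : act s (tsv_ract x b) = tsv_ract (act s x) b.
Proof.
rewrite /tensor_act tsv_ract_sum; apply: eq_bigr => p _.
by rewrite tsv_lractC -!tsv_ractA mulrC.
Qed.

Lemma tensor_actC s t x : act s (act t x) = act t (act s x).
Proof.
rewrite [act s x]/tensor_act (big_morph (act t) (tensor_actD t) (tensor_act0 t)).
by rewrite {1}/tensor_act; apply: eq_bigr => p _; rewrite tensor_actL tensor_actR.
Qed.

Lemma simple_cyclic x0 : tsv_simple V -> x0 <> tsv_zero V ->
  forall y, exists s, y = act s x0.
Proof.
case=> _ hS nz_x0.
have sub_orbit : tsv_sub (fun y => exists s, y = act s x0).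
  split; first by exists [::]; rewrite /tensor_act big_nil.
  split; first by move=> x y [s ->] [t ->]; exists (s ++ t); rewrite /tensor_act big_cat.
  split=> [a x | x b] [s ->].
    by exists [seq (a * p.1, p.2) | p <- s]; rewrite /tensor_act big_map tsv_lact_sum;
      apply: eq_bigr => p _; rewrite tsv_lactA.
  by exists [seq (p.1, p.2 * b) | p <- s]; rewrite /tensor_act big_map tsv_ract_sum;
    apply: eq_bigr => p _; rewrite tsv_lractC tsv_ractA.
case: (hS _ sub_orbit) => // H; case: nz_x0; apply: H.
by exists [:: (1, 1)]; rewrite /tensor_act big_seq1 tsv_ract1 tsv_lact1.
Qed.

Variables (x0 : V) (x0_gen : forall y, exists s, y = act s x0).

Definition gen_coef (y : V) : seq (K * K) :=
  proj1_sig (constructive_indefinite_description _ (x0_gen y)).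

Lemma gen_coefP y : y = act (gen_coef y) x0.
Proof. exact: (proj2_sig (constructive_indefinite_description _ (x0_gen y))). Qed.

(* The field structure of W = A / M, with unit x0. *)
Definition wmul x y := act (gen_coef x) y.

Lemma wmul_gen x : wmul x x0 = x.
Proof. by rewrite /wmul -gen_coefP. Qed.

Lemma wmulC x y : wmul x y = wmul y x.
Proof. by rewrite /wmul {1}(gen_coefP y) tensor_actC -gen_coefP. Qed.

Lemma wmulD x y z : wmul x (tsv_add y z) = tsv_add (wmul x y) (wmul x z).
Proof. exact: tensor_actD. Qed.

Lemma wmul0 x : wmul x (tsv_zero V) = tsv_zero V.
Proof. exact: tensor_act0. Qed.

Lemma wmulL x a y : wmul x (tsv_lact a y) = tsv_lact a (wmul x y).
Proof. exact: tensor_actL. Qed.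

Lemma wmulR x y b : wmul x (tsv_ract y b) = tsv_ract (wmul x y) b.
Proof. exact: tensor_actR. Qed.

Lemma wmul_onto x : tsv_simple V -> x <> tsv_zero V ->
  forall z, exists y, z = wmul x y.
Proof.
case=> _ hS nz_x.
have sub_image : tsv_sub (fun z => exists y, z = wmul x y).
  split; first by exists (tsv_zero V); rewrite wmul0.
  split; first by move=> _ _ [y ->] [z ->]; exists (tsv_add y z); rewrite wmulD.
  split=> [a z | z b] [y ->]; first by exists (tsv_lact a y); rewrite wmulL.
  by exists (tsv_ract y b); rewrite wmulR.
case: (hS _ sub_image) => // H; case: nz_x; apply: H.
by exists x0; rewrite wmul_gen.
Qed.

End TensorAction.

Section Coordinates.
Variables (K : fieldType) (k : {pred K}) (W : tsvs k) (m : nat) (e : 'I_m -> W).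
Hypothesis e_free : forall c, rcomb c e = tsv_zero W -> forall i, c i = 0.
Hypothesis e_span : forall x : W, exists c, x = rcomb c e.

Lemma rcombD c d :
  rcomb (fun i => c i + d i) e = tsv_add (rcomb c e) (rcomb d e).
Proof. by rewrite /rcomb -big_split; apply: eq_bigr => i _; apply: tsv_ractDr. Qed.

Lemma rcombZ c b : rcomb (fun i => c i * b) e = tsv_ract (rcomb c e) b.
Proof. by rewrite /rcomb tsv_ract_sum; apply: eq_bigr => i _; rewrite tsv_ractA. Qed.

Lemma rcomb_inj c d : rcomb c e = rcomb d e -> forall i, c i = d i.
Proof.
move=> cd i; apply/eqP; rewrite -subr_eq0; apply/eqP; move: i; apply: e_free.
apply: (@tsv_addIr _ _ W (rcomb d e)); rewrite -rcombD tsv_add0 -cd.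
by apply: eq_bigr => j _; rewrite subrK.
Qed.

Definition rcoord (x : W) : 'I_m -> K :=
  proj1_sig (constructive_indefinite_description _ (e_span x)).

Lemma rcoordP x : x = rcomb (rcoord x) e.
Proof. exact: (proj2_sig (constructive_indefinite_description _ (e_span x))). Qed.

Lemma rlin_rcoord i : rlin (rcoord^~ i).
Proof.
split=> [x y | x b].
  by apply: (rcomb_inj (d := fun i => rcoord x i + rcoord y i)); rewrite rcombD -!rcoordP.
by apply: (rcomb_inj (d := fun i => rcoord x i * b)); rewrite rcombZ -!rcoordP.
Qed.

Lemma nonzero_rlin (w : W) : w <> tsv_zero W -> exists2 psi, rlin psi & psi w <> 0.
Proof.
move=> nz_w; case: (pickP (fun i => rcoord w i != 0)) => [i /eqP nz_i | coord0].
  by exists (rcoord^~ i); first exact: rlin_rcoord.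
case: nz_w; rewrite (rcoordP w) /rcomb big1 // => i _.
by move/negbFE/eqP: (coord0 i) ->; rewrite tsv_ract0.
Qed.

End Coordinates.

Section TraceForm.
Variables (K : fieldType) (k : {pred K}) (W : tsvs k).
Hypothesis W_simple : tsv_simple W.
Variables (psi : W -> K) (w1 : W).
Hypothesis psi_rlin : rlin psi.
Hypothesis psi_w1 : psi w1 <> 0.

Let psiD := psi_rlin.1.
Let psiZ := psi_rlin.2.

Lemma w1_neq0 : w1 <> tsv_zero W.
Proof. by move=> w1_0; apply: psi_w1; rewrite w1_0 rlin_zero. Qed.

Local Notation mul := (wmul (simple_cyclic W_simple w1_neq0)).

Lemma trace_rlin x : rlin (fun y => psi (mul x y)).
Proof. by split=> [y z | y b]; rewrite ?wmulD ?psiD ?wmulR ?psiZ. Qed.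

Definition trace_form (x : tsv_op W) : rdual W := exist _ _ (trace_rlin x).

Lemma trace_form_eq0 x : trace_form x = tsv_zero (rdual W) -> x = tsv_zero W.
Proof.
move=> tx0; apply: NNPP => nz_x; apply: psi_w1.
have [y ->] := wmul_onto (simple_cyclic W_simple w1_neq0) W_simple nz_x w1.
exact: (congr1 (fun g : rdual W => sval g y) tx0).
Qed.

Lemma trace_formD x y :
  trace_form (tsv_add x y) = tsv_add (trace_form x) (trace_form y).
Proof. by apply: rd_eq => z /=; rewrite wmulC wmulD psiD !(wmulC _ z). Qed.

Lemma trace_formL a (x : tsv_op W) :
  trace_form (tsv_lact a x) = tsv_lact a (trace_form x).
Proof. by apply: rd_eq => z /=; rewrite wmulC wmulR psiZ mulrC wmulC. Qed.

Lemma trace_formR (x : tsv_op W) b :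
  trace_form (tsv_ract x b) = tsv_ract (trace_form x) b.
Proof. by apply: rd_eq => z /=; rewrite wmulC !wmulL wmulC. Qed.

Variables (m : nat) (e : 'I_m -> W).
Hypothesis e_free : forall c, rcomb c e = tsv_zero W -> forall i, c i = 0.
Hypothesis e_span : forall x : W, exists c, x = rcomb c e.

Definition gram : 'M[K]_m := \matrix_(i, j) psi (mul (e i) (e j)).

Lemma mul_row_gram (c : 'rV[K]_m) j :
  (c *m gram) 0 j = psi (mul (rcomb (c 0) e) (e j)).
Proof.
rewrite mxE wmulC (rlin_rcomb _ _ (trace_rlin _)).
by apply: eq_bigr => i _; rewrite mxE mulrC wmulC.
Qed.

Lemma gram_unit : gram \in unitmx.
Proof.
rewrite unitmxE unitfE; apply/negP => /det0P [v nz_v v_ker].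
case/eqP: nz_v; apply/rowP => i; rewrite mxE.
suff /e_free : rcomb (v 0) e = tsv_zero W by apply.
apply: trace_form_eq0; apply: rd_eq => y /=.
rewrite (rcoordP e_span y) (rlin_rcomb _ _ (trace_rlin _)) big1 // => j _.
by rewrite -mul_row_gram v_ker mxE mul0r.
Qed.

Lemma trace_form_onto (f : rdual W) : exists x, f = trace_form x.
Proof.
case: f => f f_rlin.
pose c := (\row_j f (e j)) *m invmx gram.
exists (rcomb (c 0) e); apply: rd_eq => y /=.
rewrite (rcoordP e_span y) !(rlin_rcomb _ _ (trace_rlin _)) (rlin_rcomb _ _ f_rlin).
by apply: eq_bigr => i _; rewrite -mul_row_gram mulmxKV ?gram_unit // mxE.
Qed.

End TraceForm.

Definition simple_bidim (K : fieldType) (k : {pred K}) (V : tsvs k) (n m : nat) :=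
  [/\ tsv_simple V, ldim V n & rdim V m].

Section Duals.
Variables (K : fieldType) (k : {pred K}).

Lemma simple_bidim_op (V : tsvs k) n m :
  simple_bidim V n m -> simple_bidim (tsv_op V) m n.
Proof. by case=> hS hl hr; split; [exact: simple_op | apply/ldim_op | apply/rdim_op]. Qed.

Lemma simple_bidim_rdual (W : tsvs k) n m :
  simple_bidim W n m -> simple_bidim (rdual W) m n.
Proof.
move=> hW; have [hS _ [e [e_free e_span]]] := hW.
have [[w1 nz_w1] _] := hS.
have [psi psi_rlin psi_w1] := nonzero_rlin e_free e_span nz_w1.
have [hS' hl' hr'] := simple_bidim_op hW.
have fD := trace_formD hS psi_rlin psi_w1.
have fL := trace_formL hS psi_rlin psi_w1.
have fR := trace_formR hS psi_rlin psi_w1.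
have f_eq0 := @trace_form_eq0 _ _ _ hS _ _ psi_rlin psi_w1.
have f_onto := trace_form_onto hS psi_rlin psi_w1 e_free e_span.
split; [exact: (iso_simple fD fL fR f_eq0 f_onto hS')
      | exact: (iso_ldim fD fL f_eq0 f_onto hl')
      | exact: (iso_rdim fD fR f_eq0 f_onto hr')].
Qed.

Lemma simple_bidim_ldual (V : tsvs k) n m :
  simple_bidim V n m -> simple_bidim (ldual V) m n.
Proof. by move/simple_bidim_op/simple_bidim_rdual/simple_bidim_op. Qed.

Lemma simple_bidim_iter (F : tsvs k -> tsvs k) (V : tsvs k) n m j :
  (forall U n m, simple_bidim U n m -> simple_bidim (F U) m n) ->
  simple_bidim V n m ->
  simple_bidim (iter j F V) (if odd j then m else n) (if odd j then n else m).
Proof. by move=> hF hV; elim: j => //= j; case: (odd j) => /hF. Qed.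

End Duals.

Theorem lemma4p2 (K : fieldType) (k : {pred K}) (hk : GRing.divring_closed k)
    (W : tsvs k) (n m : nat) :
  perfect_field K -> tsv_simple W -> ldim W n -> rdim W m ->
  forall i : int,
    (~~ odd `|i|%N -> ldim (idual i W) n /\ rdim (idual i W) m) /\
    (odd `|i|%N -> ldim (idual i W) m /\ rdim (idual i W) n).
Proof.
move=> _ hS hl hr i.
have hW : simple_bidim W n m by [].
case: i => j /=.
  have := simple_bidim_iter j (@simple_bidim_rdual K k) hW.
  by case: (odd j) => -[].
have /= := simple_bidim_iter j.+1 (@simple_bidim_ldual K k) hW.
by case: (odd j) => -[].
Qed.
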